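(* Let $\Xi=(\xi_\sigma)_{\sigma\in[0,\omega_1)}$ be a strictly increasing transfinite sequence of countable ordinals, set $\xi_{\omega_1}=\omega_1$, and for each limit ordinal $\lambda\in[\omega,\omega_1]$ set $\zeta_\lambda=\sup\{\xi_\sigma:\sigma\in[0,\lambda)\}$. Then: (i) the map $U_\Xi$ given by $U_\Xi(\mathbf{1}_{[0,\sigma]})=\mathbf{1}_{[0,\xi_\sigma]}$ for $\sigma\in[0,\omega_1]$ extends uniquely to a linear isometry of $C([0,\omega_1])$ onto $\overline{\operatorname{span}}\{\mathbf{1}_{[0,\xi_\sigma]}:\sigma\in[0,\omega_1]\}$; (ii) $[0,\omega_1]=[0,\xi_0]\cup\bigcup_{\sigma\in[0,\omega_1)}[\xi_\sigma+1,\xi_{\sigma+1}]\cup\bigcup_{\lambda\in[\omega,\omega_1]\text{ limit}}[\zeta_\lambda,\xi_\lambda]$, where the intervals on the right-hand side are pairwise disjoint; (iii) the map $\varphi_\Xi\colon[0,\omega_1]\to[0,\omega_1]$ defined by $\varphi_\Xi(\alpha)=\xi_0$ for $\alpha\in[0,\xi_0]$, $\varphi_\Xi(\alpha)=\xi_{\sigma+1}$ for $\alpha\in[\xi_\sigma+1,\xi_{\sigma+1}]$ with $\sigma\in[0,\omega_1)$, and $\varphi_\Xi(\alpha)=\zeta_\lambda$ for $\alpha\in[\zeta_\lambda,\xi_\lambda]$ with $\lambda\in[\omega,\omega_1]$ a limit ordinal, is continuous and satisfies $\varphi_\Xi\circ\varphi_\Xi=\varphi_\Xi$; hence the composition operator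 $\Phi_\Xi\colon f\mapsto f\circ\varphi_\Xi$ is a contractive projection of $C([0,\omega_1])$ onto $\overline{\operatorname{span}}\{\mathbf{1}_{[0,\xi_\sigma]}:\sigma\in[0,\omega_1]\}$; (iv) the matrix of $\Phi_\Xi$ is given by $(\Phi_\Xi)_{\alpha,\beta}=\delta_{\beta,\xi_0}$ for $\alpha\in[0,\xi_0]$, $(\Phi_\Xi)_{\alpha,\beta}=\delta_{\beta,\xi_{\sigma+1}}$ for $\alpha\in[\xi_\sigma+1,\xi_{\sigma+1}]$ with $\sigma\in[0,\omega_1)$, and $(\Phi_\Xi)_{\alpha,\beta}=\delta_{\beta,\zeta_\lambda}$ for $\alpha\in[\zeta_\lambda,\xi_\lambda]$ with $\lambda\in[\omega,\omega_1]$ a limit ordinal.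
   Context: $\omega$ and $\omega_1$ are the first infinite and first uncountable ordinals; $[0,\omega_1]$ has the order topology and $C([0,\omega_1])$ is the Banach space of continuous scalar-valued functions on it with the sup norm; $0$ is considered a limit ordinal, but limits $\lambda$ above range over $[\omega,\omega_1]$. $\delta_{\alpha,\beta}$ is the Kronecker delta. The matrix of an operator $T$ on $C([0,\omega_1])$ is the unique family of scalars $T_{\alpha,\beta}$ with $\sum_\beta|T_{\alpha,\beta}|<\infty$ and $Tf(\alpha)=\sum_{\beta\in[0,\omega_1]}T_{\alpha,\beta}f(\beta)$ for all $f$ and $\alpha$. *)

From HB Require Import structures.
From mathcomp Require Import all_boot all_order all_algebra.
From mathcomp Require Import all_classical all_reals all_analysis.
Set Implicit Arguments. Unset Strict Implicit. Unset Printing Implicit Defensive.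
Import Order.TTheory GRing.Theory Num.Theory.
Import numFieldNormedType.Exports.
Local Open Scope classical_set_scope.
Local Open Scope ring_scope.

(* [0, omega_1] is modelled by an arbitrary totally ordered type T with
   a top element w1 such that the order is a well-order, every proper
   initial segment [0,a) with a < w1 is countable and [0,w1) is uncountable.
   Such an ordered type is order-isomorphic to the ordinal interval
   [0, omega_1]. *)
Section Omega1.
Context {d : Order.disp_t} (T : orderType d).

Definition omega1_like (w1 : T) : Prop :=
  well_founded (fun x y : T => (x < y)%O) /\
  (forall x : T, (x <= w1)%O) /\
  (forall a : T, (a < w1)%O -> countable [set b : T | (b < a)%O]) /\
  ~ countable [set b : T | (b < w1)%O].

Definition is_succ (s t : T) : Prop :=
  (s < t)%O /\ forall g : T, (s < g)%O -> (t <= g)%O.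

(* l is a nonzero limit ordinal (z0 is the least element 0) *)
Definition is_limit (z0 l : T) : Prop :=
  l <> z0 /\ ~ (exists s : T, is_succ s l).

Definition is_sup_below (xi : T -> T) (l z : T) : Prop :=
  (forall s : T, (s < l)%O -> (xi s <= z)%O) /\
  (forall u : T, (forall s : T, (s < l)%O -> (xi s <= u)%O) -> (z <= u)%O).

Inductive piece := Pzero | Psucc of T | Plim of T.

Definition valid_piece (z0 w1 : T) (p : piece) : Prop :=
  match p with
  | Pzero => True
  | Psucc s => (s < w1)%O
  | Plim l => is_limit z0 l
  end.

Definition in_piece (z0 : T) (xi : T -> T) (p : piece) (a : T) : Prop :=
  match p with
  | Pzero => (a <= xi z0)%O
  | Psucc s => exists t : T, is_succ s t /\ (xi s < a)%O /\ (a <= xi t)%O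
  | Plim l => exists z : T, is_sup_below xi l z /\ (z <= a)%O /\ (a <= xi l)%O
  end.

Definition phi_spec (z0 w1 : T) (xi : T -> T) (phi : T -> T) : Prop :=
  (forall a : T, (a <= xi z0)%O -> phi a = xi z0) /\
  (forall s t a : T, (s < w1)%O -> is_succ s t ->
      (xi s < a)%O -> (a <= xi t)%O -> phi a = xi t) /\
  (forall l z a : T, is_limit z0 l -> is_sup_below xi l z ->
      (z <= a)%O -> (a <= xi l)%O -> phi a = z).

Context (R : realType).

Definition Ccont (f : T -> R) : Prop :=
  continuous (f : order_topology T -> R).

Definition supn (f : T -> R) : R := sup (range (fun x => `|f x|)).

Definition ind0 (a : T) : T -> R := fun x => if (x <= a)%O then 1 else 0.

Definition delta (b c : T) : R := if b == c then 1 else 0.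

Definition in_span (xi : T -> T) (g : T -> R) : Prop :=
  exists (n : nat) (c : 'I_n -> R) (s : 'I_n -> T),
    g = (fun x => \sum_(i < n) c i * ind0 (xi (s i)) x).

Definition in_cspan (xi : T -> T) (g : T -> R) : Prop :=
  Ccont g /\ forall e : R, 0 < e ->
    exists h, in_span xi h /\ supn (fun x => g x - h x) <= e.

Definition linear_on_C (U : (T -> R) -> (T -> R)) : Prop :=
  (forall f, Ccont f -> Ccont (U f)) /\
  (forall (a : R) f g, Ccont f -> Ccont g ->
     U (fun x => a * f x + g x) = (fun x => a * U f x + U g x)).

Definition lin_isometry_C (U : (T -> R) -> (T -> R)) : Prop :=
  linear_on_C U /\ (forall f, Ccont f -> supn (U f) = supn f).

(* unordered (absolutely convergent) sums over T *)
Definition abs_summable (a : T -> R) : Prop :=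
  exists M : R, forall F : seq T, uniq F -> \sum_(b <- F) `|a b| <= M.

Definition has_usum (a : T -> R) (s : R) : Prop :=
  forall e : R, 0 < e -> exists F0 : seq T, forall F : seq T,
    uniq F -> {subset F0 <= F} -> `|\sum_(b <- F) a b - s| <= e.

Definition is_matrix (P : (T -> R) -> (T -> R)) (M : T -> T -> R) : Prop :=
  forall a : T, abs_summable (M a) /\
    forall f, Ccont f -> has_usum (fun b => M a b * f b) (P f a).

End Omega1.

From HB Require Import structures.
From mathcomp Require Import all_boot all_order all_algebra.
From mathcomp Require Import all_classical all_reals all_analysis.
From mathcomp Require Import ring lra.
Set Implicit Arguments. Unset Strict Implicit. Unset Printing Implicit Defensive.
Import Order.TTheory GRing.Theory Num.Theory.
Import numFieldNormedType.Exports.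
Local Open Scope classical_set_scope.
Local Open Scope ring_scope.

(* Let xi_ceil a be the least s with a <= xi s, so that (xi_ceil a <= s) = (a <= xi s)
   and xi_ceil (xi s) = s.  It is monotone, continuous and onto, hence
   f |-> f \o xi_ceil is a linear isometry sending 1_[0, s] to 1_[0, xi s].  Every
   continuous function on [0, w1] is a uniform limit of step functions (transfinite
   induction, using that f is nearly constant on some (c, x]), so this isometry is
   unique and its range is the closed span of the 1_[0, xi s].
   The pieces of (ii) are the fibres of xi_ceil, indexed by 0, successors and limits.
   On the fibre of r, phi takes the constant value phi_idx r = phi (xi r), and
   xi_ceil (phi_idx r) = r; thus phi = phi_idx \o xi_ceil is a continuous retraction
   whose composition operator fixes exactly the closed span.  The matrix of any
   composition operator f |-> f \o p is delta(b, p a): testing against bumps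
   1_(c, b] vanishing on a large finite set isolates each coefficient. *)

Section Omega1Like.
Context {d : Order.disp_t} {T : orderType d} (z0 w1 : T).
Hypotheses (le0x : forall x : T, (z0 <= x)%O) (hT : omega1_like w1).
Local Notation oT := (order_topology T).

Section Order.
Local Open Scope order_scope.

Lemma omega1_wf : well_founded (fun x y : T => x < y).
Proof. by case: hT. Qed.

Lemma le_omega1 (x : T) : x <= w1.
Proof. by case: hT => _ []. Qed.

Lemma le0_eq (x : T) : x <= z0 -> x = z0.
Proof. by move=> xz; apply/le_anti; rewrite xz le0x. Qed.

Lemma wo_min (P : T -> Prop) : (exists x, P x) ->
  exists x, P x /\ forall y, P y -> x <= y.
Proof.
move=> [x Px]; apply: contrapT => nomin.
suff : forall y, ~ P y by move/(_ x).
apply: (well_founded_ind omega1_wf) => y IH Py; apply: nomin.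
exists y; split => // z Pz; rewrite leNgt; apply/negP => zy; exact: IH z zy Pz.
Qed.

Lemma is_succ_exists (x : T) : x < w1 -> exists t, is_succ x t.
Proof.
move=> xw; have [t [xt tmin]] := wo_min (ex_intro (fun t => x < t) w1 xw).
by exists t.
Qed.

Lemma is_succ_inj (s s' t : T) : is_succ s t -> is_succ s' t -> s = s'.
Proof.
move=> [st smin] [s't s'min]; case: (ltgtP s s') => // [ss'|s's].
- by have := smin _ ss'; rewrite leNgt s't.
- by have := s'min _ s's; rewrite leNgt st.
Qed.

Lemma ordinal_trichotomy (r : T) :
  r = z0 \/ (exists s, is_succ s r) \/ is_limit z0 r.
Proof.
have [->|rz] := eqVneq r z0; first by left.
have [|nsucc] := pselect (exists s, is_succ s r); first by right; left.
by right; right; split => //; apply/eqP.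
Qed.

Lemma is_limit_dense (l s : T) : is_limit z0 l -> s < l -> exists u, s < u < l.
Proof.
move=> [_ nsucc] sl; have [t st] := is_succ_exists (lt_le_trans sl (le_omega1 l)).
exists t; rewrite st.1 lt_neqAle st.2 // andbT.
by apply/eqP => tl; apply: nsucc; exists s; rewrite -tl.
Qed.

Lemma is_sup_below_exists (xi : T -> T) (l : T) : exists z, is_sup_below xi l z.
Proof.
have [z [zub zmin]] := wo_min (ex_intro (fun u => forall s, s < l -> xi s <= u) w1
  (fun s _ => le_omega1 (xi s))).
by exists z.
Qed.

Lemma homo_lt_omega1 (xi : T -> T) : (forall s, s < w1 -> xi s < w1) ->
  (forall s t, s < t -> t < w1 -> xi s < xi t) -> xi w1 = w1 ->
  {homo xi : s t / s < t}.
Proof.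
move=> xi_lt xi_inc xi_top s t st; have [tw|wt] := ltP t w1; first exact: xi_inc.
have tw : t = w1 by apply/le_anti; rewrite le_omega1.
by rewrite tw xi_top xi_lt // -tw.
Qed.

End Order.

Section Topology.
Local Open Scope order_scope.

Lemma nbhs_gt (c x : T) : c < x -> nbhs (x : oT) [set y : T | c < y].
Proof.
move=> cx; apply: open_nbhs_nbhs; split => //.
have -> : [set y : T | c < y] = [set` `]c, +oo[%O] :> set oT.
  by apply/seteqP; split => y /=; rewrite in_itv /= andbT.
exact: rray_open.
Qed.

(* [0, x] is open: it is [0, x + 1) when x < w1, and everything when x = w1. *)
Lemma nbhs_le (x : T) : nbhs (x : oT) [set y : T | y <= x].
Proof.
have [xw|wx] := ltP x w1; last first.
  suff -> : [set y : T | y <= x] = setT by exact: filterT.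
  by apply/seteqP; split => y //= _; exact: le_trans (le_omega1 y) wx.
have [t [xt tmin]] := is_succ_exists xw.
apply: open_nbhs_nbhs; split; last by rewrite /= lexx.
have -> : [set y : T | y <= x] = [set` `]-oo, t[%O] :> set oT.
  apply/seteqP; split => y /=; rewrite in_itv /=; first by move/le_lt_trans; apply.
  by move=> yt; rewrite leNgt; apply/negP => /tmin; rewrite leNgt yt.
exact: lray_open.
Qed.

Lemma nbhs_left_interval (x : T) (U : set T) : nbhs (x : oT) U -> x != z0 ->
  exists2 c, c < x & forall y, c < y -> y <= x -> U y.
Proof.
rewrite order_nbhs_itv => -[i [oi xi] iU] xz.
have z0x : z0 < x by rewrite lt_neqAle eq_sym xz le0x.
move: oi xi iU; case: i => [[[] l|[]] [[] r|[]]] //= _.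
- rewrite in_itv /= => /andP[lx xr] iU; exists l => // y ly yx.
  by apply: iU => /=; rewrite in_itv /= ly (le_lt_trans yx xr).
- rewrite in_itv /= => /andP[lx _] iU; exists l => // y ly yx.
  by apply: iU => /=; rewrite in_itv /= ly.
- rewrite in_itv /= => xr iU; exists z0 => // y ly yx.
  by apply: iU => /=; rewrite in_itv /= (le_lt_trans yx xr).
- by move=> _ iU; exists z0 => // y _ _; apply: iU => /=; rewrite in_itv.
Qed.

(* Every point other than 0 has the neighbourhood basis (c, x], and 0 is isolated. *)
Lemma homo_continuous (f : T -> T) : {homo f : x y / x <= y} ->
  (forall x c, x != z0 -> c < f x -> exists2 c', c' < x & forall y, c' < y -> c < f y) ->
  continuous (f : oT -> oT).
Proof.
move=> f_homo f_lc x U /=; rewrite nbhs_simpl /= => fxU.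
have Ufx : U (f x) := nbhs_singleton fxU.
have [fxz|fxz] := eqVneq (f x) z0.
  apply: filterS (nbhs_le x) => y /= yx.
  by have := f_homo _ _ yx; rewrite fxz => /le0_eq ->; rewrite -fxz.
have [c cfx cU] := nbhs_left_interval fxU fxz.
have [xz|xz] := eqVneq x z0.
  by apply: filterS (nbhs_le x) => y /= /[!xz] /le0_eq ->; rewrite -xz.
have [c' c'x c'f] := f_lc x c xz cfx.
apply: filterS (filterI (nbhs_gt c'x) (nbhs_le x)) => y /= [c'y yx].
exact: cU (c'f y c'y) (f_homo _ _ yx).
Qed.

End Topology.

Section Functions.
Variable R : realType.

Lemma CcontP (f : T -> R) : Ccont f <->
  forall x e, 0 < e -> nbhs (x : oT) [set y | `|f x - f y| <= e].
Proof.
split => [fc x | fc x].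
  exact: (@cvgrPdist_le _ _ _ _ (nbhs_filter (x : oT)) f (f x)).1 (fc x).
by apply/(@cvgrPdist_le _ _ _ _ (nbhs_filter (x : oT)) f (f x)); apply: fc.
Qed.

Lemma Ccont_locally_constant (f : T -> R) :
  (forall x, nbhs (x : oT) [set y | f y = f x]) -> Ccont f.
Proof.
move=> flc; apply/CcontP => x e e0; apply: filterS (flc x) => y /= ->.
by rewrite subrr normr0 ltW.
Qed.

Lemma Ccont_cst (a : R) : Ccont (fun _ : T => a).
Proof.
apply: Ccont_locally_constant => x.
exact: filterS (@filterT _ _ (nbhs_filter (x : oT))).
Qed.

Lemma Ccont_lin (a : R) (f g : T -> R) : Ccont f -> Ccont g ->
  Ccont (fun x => a * f x + g x).
Proof.
move=> fc gc x.
apply: (@cvgD _ _ _ (nbhs (x : oT)) (nbhs_filter (x : oT)) (fun x => a * f x) g).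
  exact: (@cvgMl_tmp _ _ (nbhs (x : oT)) (nbhs_filter (x : oT)) f a (f x) (fc x)).
exact: gc.
Qed.

Lemma Ccont_comp (f : T -> R) (p : T -> T) : continuous (p : oT -> oT) -> Ccont f ->
  Ccont (f \o p).
Proof. by move=> pc fc x; apply: continuous_comp (pc x) (fc (p x)). Qed.

Lemma Ccont_uniform_limit (k : T -> R) :
  (forall e, 0 < e -> exists h, Ccont h /\ forall y, `|k y - h y| <= e) -> Ccont k.
Proof.
move=> approx; apply/CcontP => x e e0.
have [h [/CcontP hc hk]] := approx _ (divr_gt0 e0 (ltr0n _ 3)).
apply: filterS (hc x _ (divr_gt0 e0 (ltr0n _ 3))) => y /= hxy.
have -> : k x - k y = (k x - h x) + (h x - h y) - (k y - h y) by ring.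
apply: le_trans (ler_normB _ _) _; apply: le_trans (lerD (ler_normD _ _) (lexx _)) _.
have := hk x; have := hk y; move: hxy.
set A := `|k x - h x|; set B := `|h x - h y|; set C := `|k y - h y|.
move=> *; lra.
Qed.

Lemma span_ind0 (xi : T -> T) (s : T) : in_span xi (ind0 R (xi s)).
Proof.
exists 1%N, (fun _ => 1), (fun _ => s); apply: funext => x.
by rewrite big_ord1 mul1r.
Qed.

Lemma span_add (xi : T -> T) (g h : T -> R) : in_span xi g -> in_span xi h ->
  in_span xi (fun x => g x + h x).
Proof.
move=> [m [c1 [s1 ->]]] [n [c2 [s2 ->]]].
exists (m + n)%N, (fun i => match fintype.split i with inl j => c1 j | inr k => c2 k end),
  (fun i => match fintype.split i with inl j => s1 j | inr k => s2 k end).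
apply: funext => x; rewrite big_split_ord /=.
by congr (_ + _); apply: eq_bigr => i _; rewrite ?(unsplitK (inl _ i)) ?(unsplitK (inr _ i)).
Qed.

Lemma span_scale (xi : T -> T) (a : R) (g : T -> R) : in_span xi g ->
  in_span xi (fun x => a * g x).
Proof.
move=> [n [c [s ->]]]; exists n, (fun i => a * c i), s.
by apply: funext => x; rewrite mulr_sumr; apply: eq_bigr => i _; rewrite mulrA.
Qed.

Lemma span_mul_ind0 (g : T -> R) (c : T) : in_span id g ->
  in_span id (fun x => g x * ind0 R c x).
Proof.
move=> [n [a [s ->]]]; exists n, a, (fun i => Order.min (s i) c).
apply: funext => x; rewrite mulr_suml; apply: eq_bigr => i _; rewrite -mulrA.
by congr (_ * _); rewrite /ind0 /= le_min; do 2 case: (x <= _)%O; rewrite ?mulr1 ?mulr0.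
Qed.

Lemma span_locally_constant (xi : T -> T) (h : T -> R) : in_span xi h ->
  forall x, nbhs (x : oT) [set y | h y = h x].
Proof.
have ind0_lc s x : nbhs (x : oT) [set y | ind0 R s y = ind0 R s x].
  rewrite /ind0; have [xs|sx] := leP x s.
    by apply: filterS (nbhs_le x) => y /= yx; rewrite (le_trans yx xs).
  by apply: filterS (nbhs_gt sx) => y /= sy; rewrite leNgt sy.
move=> [n [c [s ->]]] x.
have := @filter_forall _ _
  (fun i : 'I_n => [set y | ind0 R (xi (s i)) y = ind0 R (xi (s i)) x])
  _ (nbhs_filter (x : oT)) (fun i => ind0_lc (xi (s i)) x).
apply: filterS => y /= ys.
by apply: eq_bigr => i _; rewrite ys.
Qed.

Lemma Ccont_span (xi : T -> T) (h : T -> R) : in_span xi h -> Ccont h.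
Proof. by move/span_locally_constant; apply: Ccont_locally_constant. Qed.

Lemma Ccont_ind0 (s : T) : Ccont (ind0 R s).
Proof. exact: Ccont_span (span_ind0 id s). Qed.

(* By transfinite induction on x: f is e-close to f x on some (c, x], so patching an
   approximation valid on [0, c] with f x * 1_(c, x] gives one valid on [0, x]. *)
Lemma step_approx (f : T -> R) (e : R) : Ccont f -> 0 < e ->
  exists h, in_span id h /\ forall y, `|f y - h y| <= e.
Proof.
move=> /CcontP fc e0.
suff : forall x, exists h, in_span id h /\ forall y, (y <= x)%O -> `|f y - h y| <= e.
  by move=> /(_ w1) [h [sh fh]]; exists h; split => // y; apply/fh/le_omega1.
apply: (well_founded_ind omega1_wf) => x IH.
have [->|xz] := eqVneq x z0.
  exists (fun y => f z0 * ind0 R z0 y); split; first exact/span_scale/(span_ind0 id).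
  by move=> y /le0_eq ->; rewrite /ind0 lexx mulr1 subrr normr0 ltW.
have [c cx fcx] := nbhs_left_interval (fc x e e0) xz.
have [h [sh fh]] := IH c cx.
exists (fun y => h y * ind0 R c y + (f x * ind0 R x y + - f x * ind0 R c y)); split.
  apply: span_add; first exact: span_mul_ind0.
  by apply: span_add; apply/span_scale/(span_ind0 id).
move=> y yx; have [yc|cy] := leP y c.
  by rewrite /ind0 yc (le_trans yc (ltW cx)) !mulr1 addrN addr0; apply: fh.
by rewrite /ind0 yx leNgt cy /= !mulr0 mulr1 add0r addr0 distrC; apply: fcx.
Qed.

Lemma span_bounded (xi : T -> T) (h : T -> R) : in_span xi h ->
  exists B, forall x, `|h x| <= B.
Proof.
move=> [n [c [s ->]]]; exists (\sum_(i < n) `|c i|) => x.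
apply: le_trans (ler_norm_sum _ _ _) _; apply: ler_sum => i _.
by rewrite normrM; apply: ler_piMr => //; rewrite /ind0; case: ifP; rewrite ?normr1 ?normr0.
Qed.

Lemma Ccont_bounded (f : T -> R) : Ccont f -> exists B, forall x, `|f x| <= B.
Proof.
move=> fc; have [h [/span_bounded[B hB] fh]] := step_approx fc ltr01.
exists (1 + B) => x; rewrite -[f x](subrK (h x)).
by apply: le_trans (ler_normD _ _) _; apply: lerD.
Qed.

Lemma supn_ge (f : T -> R) : (exists B, forall x, `|f x| <= B) ->
  forall x, `|f x| <= supn f.
Proof.
move=> [B fB] x; apply: ub_le_sup; last by exists x.
by exists B => _ [y _ <-].
Qed.

Lemma supn_le (f : T -> R) (e : R) : (forall x, `|f x| <= e) -> supn f <= e.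
Proof. by move=> fe; apply: ge_sup; [exists `|f z0|, z0|move=> _ [y _ <-]]. Qed.

Lemma supn_comp_le (f : T -> R) (p : T -> T) : Ccont f -> supn (f \o p) <= supn f.
Proof.
by move=> /Ccont_bounded fB; apply: supn_le => x; exact: supn_ge fB (p x).
Qed.

Lemma supn_comp_surj (f : T -> R) (p : T -> T) : (forall y, exists x, p x = y) ->
  supn (f \o p) = supn f.
Proof.
move=> psurj; rewrite /supn; congr sup; apply/seteqP; split => _ [y _ <-] /=.
  by exists (p y).
by have [x <-] := psurj y; exists x.
Qed.

Lemma eq0_small (a : R) : (forall e, 0 < e -> `|a| <= e + e) -> a = 0.
Proof.
move=> small; apply/normr0_eq0/le_anti; rewrite normr_ge0 andbT.
apply/ler_addgt0Pr => e e0; rewrite add0r.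
by have := small (e / 2) (divr_gt0 e0 (ltr0n _ 2)); rewrite -splitr.
Qed.

Lemma in_cspan_approx (xi : T -> T) (g : T -> R) : in_cspan xi g ->
  forall e, 0 < e -> exists h, in_span xi h /\ forall y, `|g y - h y| <= e.
Proof.
move=> [/Ccont_bounded[B1 gB] gapprox] e e0.
have [h [sh ghe]] := gapprox e e0; exists h; split => // y.
apply: le_trans ghe; apply: (supn_ge (f := fun x => g x - h x)).
have [B2 hB] := span_bounded sh.
by exists (B1 + B2) => x; apply: le_trans (ler_normB _ _) _; apply: lerD.
Qed.

(* The hypothesis says 1_[0, xi s] \o p = 1_[0, xi s]; density does the rest. *)
Lemma in_cspan_comp_id (xi p : T -> T) (g : T -> R) : in_cspan xi g ->
  (forall s x, (p x <= xi s)%O = (x <= xi s)%O) -> g \o p = g.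
Proof.
move=> gcs pxi; apply: funext => y /=; apply/eqP; rewrite -subr_eq0; apply/eqP.
apply: eq0_small => e e0; have [h [[n [c [s hE]]] gh]] := in_cspan_approx gcs e0.
have hp : h (p y) = h y.
  by rewrite hE; apply: eq_bigr => i _; rewrite /ind0 pxi.
have -> : g (p y) - g y = (g (p y) - h (p y)) - (g y - h y) by rewrite hp; ring.
by apply: le_trans (ler_normB _ _) _; apply: lerD.
Qed.

Lemma linear_on_C0 (V : (T -> R) -> (T -> R)) : linear_on_C V ->
  V (fun _ => 0) = (fun _ => 0).
Proof.
move=> [_ Vlin]; have := Vlin 1 _ _ (Ccont_cst (a := 0)) (Ccont_cst (a := 0)).
have -> : (fun _ : T => 1 * 0 + 0) = (fun _ => 0 : R) by apply: funext => x; ring.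
by move=> V0; apply: funext => x; have := congr1 (fun F => F x) V0 => /=; lra.
Qed.

Lemma linear_on_C_span_eq (V1 V2 : (T -> R) -> (T -> R)) :
  linear_on_C V1 -> linear_on_C V2 -> (forall s, V1 (ind0 R s) = V2 (ind0 R s)) ->
  forall h, in_span id h -> V1 h = V2 h.
Proof.
move=> V1lin V2lin V12 h [n [c [s ->]]]; elim: n c s => [|n IH] c s.
  have -> : (fun x => \sum_(i < 0) c i * ind0 R (s i) x) = (fun _ => 0).
    by apply: funext => x; rewrite big_ord0.
  by rewrite (linear_on_C0 V1lin) (linear_on_C0 V2lin).
pose c' i := c (widen_ord (leqnSn n) i); pose s' i := s (widen_ord (leqnSn n) i).
have -> : (fun x => \sum_(i < n.+1) c i * ind0 R (s i) x) =
    (fun x => c ord_max * ind0 R (s ord_max) x + \sum_(i < n) c' i * ind0 R (s' i) x).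
  by apply: funext => x; rewrite big_ord_recr addrC.
have cs : Ccont (fun x => \sum_(i < n) c' i * ind0 R (s' i) x).
  by apply: (Ccont_span (xi := id)); exists n, c', s'.
by rewrite V1lin.2 ?V2lin.2 ?V12 ?IH //; exact: Ccont_ind0.
Qed.

Lemma lin_isometry_C_unique (V1 V2 : (T -> R) -> (T -> R)) :
  lin_isometry_C V1 -> lin_isometry_C V2 -> (forall s, V1 (ind0 R s) = V2 (ind0 R s)) ->
  forall f, Ccont f -> V1 f = V2 f.
Proof.
move=> [V1lin V1iso] [V2lin V2iso] V12 f fc; apply: funext => y.
apply/eqP; rewrite -subr_eq0; apply/eqP; apply: eq0_small => e e0.
have [h [sh fh]] := step_approx fc e0.
have hc : Ccont h := Ccont_span sh.
have near_h V : linear_on_C V -> (forall f, Ccont f -> supn (V f) = supn f) ->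
    `|V f y - V h y| <= e.
  move=> Vlin Viso; have dc := Ccont_lin (a := -1) hc fc.
  have := supn_ge (Ccont_bounded (Vlin.1 _ dc)) y.
  rewrite Viso // Vlin.2 // mulN1r addrC => /le_trans; apply.
  by apply: supn_le => x; rewrite mulN1r addrC.
have -> : V1 f y - V2 f y = (V1 f y - V1 h y) - (V2 f y - V2 h y).
  by rewrite (linear_on_C_span_eq V1lin V2lin V12 sh); ring.
by apply: le_trans (ler_normB _ _) _; apply: lerD; apply: near_h.
Qed.

End Functions.

Section Increasing.
Variable xi : T -> T.
Hypotheses (xi_inc : {homo xi : s t / (s < t)%O}) (xi_top : xi w1 = w1).
Local Open Scope order_scope.

(* The minimum exists since x <= w1 = xi w1, so the default w1 of xget is never used. *)
Definition xi_ceil (x : T) : T :=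
  xget w1 (fun s => x <= xi s /\ forall t, x <= xi t -> s <= t).

Lemma xi_leE : {mono xi : s t / s <= t}.
Proof. exact: le_mono. Qed.

Lemma xi_ceil_leE (x s : T) : (xi_ceil x <= s) = (x <= xi s).
Proof.
have [x_le xi_ceil_min] : x <= xi (xi_ceil x) /\ forall t, x <= xi t -> xi_ceil x <= t.
  apply: (xgetPex w1 (P := fun s => x <= xi s /\ forall t, x <= xi t -> s <= t)).
  have xw : x <= xi w1 by rewrite xi_top le_omega1.
  have [t ?] := wo_min (ex_intro (fun s => x <= xi s) w1 xw).
  by exists t.
apply/idP/idP; last exact: xi_ceil_min.
by move=> cs; apply: le_trans x_le _; rewrite xi_leE.
Qed.

Lemma xi_ceil_ltE (x s : T) : (s < xi_ceil x) = (xi s < x).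
Proof. by rewrite !ltNge xi_ceil_leE. Qed.

Lemma le_xi_ceil (x : T) : x <= xi (xi_ceil x).
Proof. by rewrite -xi_ceil_leE. Qed.

Lemma xi_ceil_homo : {homo xi_ceil : x y / x <= y}.
Proof. by move=> x y xy; rewrite xi_ceil_leE (le_trans xy (le_xi_ceil y)). Qed.

Lemma xi_ceilK : cancel xi xi_ceil.
Proof. by move=> s; apply/le_anti; rewrite xi_ceil_leE lexx -xi_leE le_xi_ceil. Qed.

Lemma xi_ceil_continuous : continuous (xi_ceil : oT -> oT).
Proof.
apply: homo_continuous xi_ceil_homo _ => x c _ cx.
by exists (xi c) => [|y]; rewrite -xi_ceil_ltE.
Qed.

Lemma lt_sup_below (l z s : T) : is_limit z0 l -> is_sup_below xi l z -> s < l ->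
  xi s < z.
Proof.
move=> ll [zub _] sl; have [u /andP[su ul]] := is_limit_dense ll sl.
exact: lt_le_trans (xi_inc su) (zub _ ul).
Qed.

Lemma sup_below_le (l z : T) : is_sup_below xi l z -> z <= xi l.
Proof. by case=> _; apply => s sl; apply/ltW/xi_inc. Qed.

(* The piece [0, xi 0] has index 0, [xi s + 1, xi t] has index t = s + 1 and
   [zeta l, xi l] has index l. *)
Definition piece_index (p : piece T) (r : T) : Prop :=
  match p with
  | Pzero => r = z0
  | Psucc s => is_succ s r
  | Plim l => l = r /\ is_limit z0 l
  end.

Lemma piece_index_exists (r : T) : exists p, valid_piece z0 w1 p /\ piece_index p r.
Proof.
have [->|[[s sr]|rl]] := ordinal_trichotomy r; first by exists (Pzero T).
  by exists (Psucc s); split => //=; exact: lt_le_trans sr.1 (le_omega1 r).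
by exists (Plim r).
Qed.

Lemma piece_index_inj (p q : piece T) (r : T) :
  piece_index p r -> piece_index q r -> p = q.
Proof.
have succ0 s : ~ is_succ s z0 by case=> + _; rewrite ltNge le0x.
case: p => [|s|l] /=; case: q => [|s'|l'] //=.
- by move=> -> /succ0.
- by move=> -> [-> [zz _]].
- by move=> ss rz; case: (succ0 s); rewrite -rz.
- by move=> ss' s's; rewrite (is_succ_inj ss' s's).
- by move=> ss [lr [_ nsucc]]; case: nsucc; exists s; rewrite lr.
- by move=> [lr [lz _]] rz; case: lz; rewrite lr.
- by move=> [lr [_ nsucc]] ss; case: nsucc; exists s'; rewrite lr.
- by move=> [-> _] [-> _].
Qed.

Lemma in_pieceE (p : piece T) (a : T) : valid_piece z0 w1 p ->
  in_piece z0 xi p a <-> piece_index p (xi_ceil a).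
Proof.
move=> vp; split.
- case: p vp => [|s|l] /= vp.
  + by move=> ?; apply/le0_eq; rewrite xi_ceil_leE.
  + move=> [t [st [sa at_]]]; suff -> : xi_ceil a = t by [].
    by apply/le_anti; rewrite xi_ceil_leE at_ st.2 // xi_ceil_ltE.
  + move=> [z [lz [za al]]]; split => //; apply/le_anti.
    rewrite xi_ceil_leE al andbT leNgt; apply/negP => /(lt_sup_below vp lz) ltz.
    by have := lt_le_trans ltz za; rewrite ltNge le_xi_ceil.
- case: p vp => [|s|l] /= vp.
  + by rewrite -xi_ceil_leE => ->.
  + move=> sa; exists (xi_ceil a); split => //; split; last exact: le_xi_ceil.
    by have := sa.1; rewrite xi_ceil_ltE.
  + move=> [-> _]; have [z [zub zmin]] := is_sup_below_exists xi (xi_ceil a).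
    exists z; rewrite le_xi_ceil; split => //; split => //.
    by apply: zmin => s; rewrite xi_ceil_ltE => /ltW.
Qed.

Section Real.
Variable R : realType.

Lemma ind0_xi_ceil (s x : T) : ind0 R s (xi_ceil x) = ind0 R (xi s) x.
Proof. by rewrite /ind0 xi_ceil_leE. Qed.

Lemma comp_xi_ceil_lin_isometry : lin_isometry_C (fun f : T -> R => f \o xi_ceil).
Proof.
split; first by split => // f; apply: Ccont_comp xi_ceil_continuous.
by move=> f _; apply: supn_comp_surj => s; exists (xi s); rewrite xi_ceilK.
Qed.

Lemma comp_xi_ceil_ind0 (s : T) : ind0 R s \o xi_ceil = ind0 R (xi s).
Proof. by apply: funext => x /=; rewrite ind0_xi_ceil. Qed.

Lemma comp_xi_ceil_in_cspan (k : T -> R) : Ccont k -> in_cspan xi (k \o xi_ceil).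
Proof.
move=> kc; split; first exact: Ccont_comp xi_ceil_continuous kc.
move=> e e0; have [h [[n [c [s hE]]] kh]] := step_approx kc e0.
exists (fun x => \sum_(i < n) c i * ind0 R (xi (s i)) x); split; first by exists n, c, s.
apply: supn_le => x /=; suff <- : h (xi_ceil x) = \sum_(i < n) c i * ind0 R (xi (s i)) x.
  exact: kh.
by rewrite hE; apply: eq_bigr => i _; rewrite ind0_xi_ceil.
Qed.

Lemma in_cspan_comp_xi (g : T -> R) : in_cspan xi g ->
  Ccont (g \o xi) /\ (g \o xi) \o xi_ceil = g.
Proof.
move=> gcs; split; last by apply: in_cspan_comp_id gcs _ => s x; rewrite xi_leE xi_ceil_leE.
apply: Ccont_uniform_limit => e e0; have [h [[n [c [s ->]]] gh]] := in_cspan_approx gcs e0.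
exists (fun x => \sum_(i < n) c i * ind0 R (xi (s i)) (xi x)); split => [|y]; last exact: gh.
apply: (Ccont_span (xi := id)); exists n, c, s; apply: funext => x.
by apply: eq_bigr => i _; rewrite /ind0 xi_leE.
Qed.

End Real.

Section Projection.
Variable phi : T -> T.
Hypothesis phiP : phi_spec z0 w1 xi phi.

(* xi r lies in the piece of index r, on which phi is constant. *)
Definition phi_idx (r : T) : T := phi (xi r).

Lemma phi_idx_z0 : phi_idx z0 = xi z0.
Proof. by case: phiP => + _; apply. Qed.

Lemma phi_idx_succ (s r : T) : is_succ s r -> phi_idx r = xi r.
Proof.
move=> sr; case: phiP => _ [phiS _]; apply: (phiS s) => //.
- exact: lt_le_trans sr.1 (le_omega1 r).
- exact: xi_inc sr.1.
Qed.

Lemma phi_idx_lim (r z : T) : is_limit z0 r -> is_sup_below xi r z -> phi_idx r = z.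
Proof.
by move=> rl rz; case: phiP => _ [_ phiL]; apply: (phiL r) => //; exact: sup_below_le.
Qed.

Lemma phi_idx_le (r : T) : phi_idx r <= xi r.
Proof.
have [->|[[s sr]|rl]] := ordinal_trichotomy r; first by rewrite phi_idx_z0.
  by rewrite (phi_idx_succ sr).
by have [z rz] := is_sup_below_exists xi r; rewrite (phi_idx_lim rl rz) sup_below_le.
Qed.

Lemma lt_phi_idx (t r : T) : t < r -> xi t < phi_idx r.
Proof.
move=> tr; have [rz|[[s sr]|rl]] := ordinal_trichotomy r.
- by move: tr; rewrite rz ltNge le0x.
- by rewrite (phi_idx_succ sr) xi_inc.
- by have [z rz] := is_sup_below_exists xi r; rewrite (phi_idx_lim rl rz) (lt_sup_below rl rz).
Qed.

Lemma phiE (x : T) : phi x = phi_idx (xi_ceil x).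
Proof.
have below u : u < xi_ceil x -> xi u < x by rewrite xi_ceil_ltE.
case: phiP => phi0 [phiS phiL].
have [rz|[[s sr]|rl]] := ordinal_trichotomy (xi_ceil x).
- by rewrite rz phi_idx_z0 phi0 // -xi_ceil_leE rz.
- rewrite (phi_idx_succ sr) (phiS s (xi_ceil x)) ?le_xi_ceil ?below //; last exact: sr.1.
  exact: lt_le_trans sr.1 (le_omega1 _).
- have [z rz] := is_sup_below_exists xi (xi_ceil x).
  rewrite (phi_idx_lim rl rz) (phiL (xi_ceil x) z) ?le_xi_ceil //.
  by case: rz => _; apply => u /below /ltW.
Qed.

Lemma phi_idxK : cancel phi_idx xi_ceil.
Proof.
move=> r; apply/le_anti; rewrite xi_ceil_leE phi_idx_le leNgt /=.
by apply/negP => /lt_phi_idx; rewrite ltNge le_xi_ceil.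
Qed.

Lemma phi_idx_homo : {homo phi_idx : r r' / r <= r'}.
Proof.
move=> r r'; rewrite le_eqVlt => /predU1P[->//|rr'].
exact: le_trans (phi_idx_le r) (ltW (lt_phi_idx rr')).
Qed.

Lemma phi_idx_continuous : continuous (phi_idx : oT -> oT).
Proof.
apply: homo_continuous phi_idx_homo _ => r c rz cr.
have [rz'|[[s sr]|rl]] := ordinal_trichotomy r; first by rewrite rz' eqxx in rz.
  exists s => [|y /sr.2 ry]; first exact: sr.1.
  exact: lt_le_trans cr (phi_idx_homo ry).
have [z rz'] := is_sup_below_exists xi r; rewrite (phi_idx_lim rl rz') in cr.
have [t tr ct] : exists2 t, t < r & c < xi t.
  apply: contrapT => nt; suff : z <= c by rewrite leNgt cr.
  case: rz' => _; apply => t tr; rewrite leNgt; apply/negP => ct; apply: nt.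
  by exists t.
by exists t => // y ty; exact: lt_trans ct (lt_phi_idx ty).
Qed.

Lemma phi_continuous : continuous (phi : oT -> oT).
Proof.
move=> x; rewrite (funext phiE).
exact: continuous_comp (@xi_ceil_continuous x) (@phi_idx_continuous (xi_ceil x)).
Qed.

Lemma xi_ceil_phi (x : T) : xi_ceil (phi x) = xi_ceil x.
Proof. by rewrite phiE phi_idxK. Qed.

Lemma phi_idem : phi \o phi = phi.
Proof. by apply: funext => x /=; rewrite phiE xi_ceil_phi -phiE. Qed.

Section Real.
Variable R : realType.

Lemma comp_phi_in_cspan (f : T -> R) : Ccont f -> in_cspan xi (f \o phi).
Proof.
move=> fc; rewrite (funext phiE) -[fun x => _]/(phi_idx \o xi_ceil) compA.
exact/comp_xi_ceil_in_cspan/(Ccont_comp phi_idx_continuous).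
Qed.

Lemma in_cspan_comp_phi (g : T -> R) : in_cspan xi g -> g \o phi = g.
Proof.
by move=> gcs; apply: in_cspan_comp_id gcs _ => s x; rewrite -!xi_ceil_leE xi_ceil_phi.
Qed.

End Real.
End Projection.
End Increasing.

Section Matrix.
Variable R : realType.

Lemma sum_delta (F : seq T) (c : T) (g : T -> R) : uniq F ->
  \sum_(b <- F) delta R b c * g b = (c \in F)%:R * g c.
Proof.
elim: F => [|x F IH] /=; first by rewrite big_nil mul0r.
move=> /andP[xF uF]; rewrite big_cons IH // in_cons /delta.
by have [<-|xc] := eqVneq x c; rewrite ?(negbTE xF) /=; ring.
Qed.

Lemma comp_is_matrix (p : T -> T) :
  is_matrix (fun f : T -> R => f \o p) (fun a b => delta R b (p a)).
Proof.
move=> a; split.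
  exists 1 => F uF; rewrite (eq_bigr (fun b => delta R b (p a) * 1)).
    by rewrite sum_delta // mulr1; case: (p a \in F).
  by move=> b _; rewrite mulr1 /delta; case: (b == p a); rewrite ?normr1 ?normr0.
move=> f fc e e0; exists [:: p a] => F uF pF.
by rewrite sum_delta // pF ?mem_head //= mul1r subrr normr0 ltW.
Qed.

Lemma abs_summable_tail (m : T -> R) : abs_summable m -> forall e, 0 < e ->
  exists2 F, uniq F & forall H, uniq H -> (forall y, y \in H -> y \notin F) ->
    \sum_(y <- H) `|m y| <= e.
Proof.
move=> [B mB] e e0.
pose S := [set x : R | exists F : seq T, uniq F /\ x = \sum_(y <- F) `|m y|].
have supS : has_sup S.
  split; first by exists 0, [::]; rewrite big_nil.
  by exists B => _ [F [uF ->]]; apply: mB.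
have [_ [F [uF ->]] Fsup] := sup_adherent e0 supS.
exists F => // H uH FH.
have : \sum_(y <- F ++ H) `|m y| <= sup S.
  apply: sup_upper_bound => //; exists (F ++ H); split => //.
  by rewrite cat_uniq uF uH andbT; apply/hasPn => y /FH.
rewrite big_cat /=; lra.
Qed.

(* Testing against such an f isolates m b, up to the tail of m outside F. *)
Lemma coef_isolate (m : T -> R) (F : seq T) (b c : T) (f : T -> R) (e : R) :
  (forall H, uniq H -> (forall y, y \in H -> y \notin F) -> \sum_(y <- H) `|m y| <= e) ->
  has_usum (fun y => m y * f y) (f c) -> 0 < e ->
  f b = 1 -> (forall y, y \in F -> y != b -> f y = 0) -> (forall y, `|f y| <= 1) ->
  `|m b - f c| <= e + e.
Proof.
move=> mtail msum e0 fb fF f1; have [F0 F0sum] := msum e e0.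
set G := undup (F0 ++ F ++ [:: b]).
have uG : uniq G by apply: undup_uniq.
have bG : b \in G by rewrite mem_undup !mem_cat mem_head !orbT.
have sG : {subset F0 <= G} by move=> y yF0; rewrite mem_undup mem_cat yF0.
have := F0sum G uG sG.
rewrite (bigD1_seq b bG uG) /= fb mulr1.
set Q := \sum_(y <- G | y != b) m y * f y => sumG.
have Qe : `|Q| <= e.
  apply: le_trans (ler_norm_sum _ _ _) _.
  apply: le_trans (mtail [seq y <- G | (y != b) && (y \notin F)] (filter_uniq _ uG) _);
    last by move=> y; rewrite mem_filter => /andP[/andP[]].
  rewrite big_filter big_mkcond [X in _ <= X]big_mkcond /=; apply: ler_sum => y _.
  case: (eqVneq y b) => //= yb; case: (boolP (y \in F)) => yF /=.
    by rewrite fF // mulr0 normr0.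
  by rewrite normrM; apply: ler_piMr => //; apply: f1.
have -> : m b - f c = (m b + Q - f c) - Q by ring.
by apply: le_trans (ler_normB _ _) _; apply: lerD.
Qed.

(* 1_(c, b], where c is the largest element of L below b. *)
Lemma bump_exists (b : T) (L : seq T) : exists f : T -> R,
  [/\ Ccont f, f b = 1, forall y, y \in L -> f y = (y == b)%:R & forall y, `|f y| <= 1].
Proof.
have ind0_le1 s y : `|ind0 R s y| <= 1 by rewrite /ind0; case: ifP; rewrite ?normr1 ?normr0.
have [bz|bz] := eqVneq b z0.
  exists (ind0 R z0); split => //; first exact: Ccont_ind0.
    by rewrite /ind0 bz lexx.
  by move=> y _; rewrite /ind0 bz; case: leP => [/le0_eq->|/gt_eqF->]; rewrite ?eqxx.
set c := \big[Order.max/z0]_(y <- L | (y < b)%O) y.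
have cb : (c < b)%O by apply: bigmax_lt => //; rewrite lt_neqAle eq_sym bz le0x.
exists (fun y => -1 * ind0 R c y + ind0 R b y); split.
- exact/Ccont_lin/Ccont_ind0/Ccont_ind0.
- by rewrite /ind0 leNgt cb lexx /=; ring.
- move=> y yL; rewrite /ind0; have [yb|by_|->] := ltgtP y b.
  + have yc : (y <= c)%O by exact: le_bigmax_seq.
    by rewrite yc /=; ring.
  + by rewrite leNgt (lt_trans cb by_) /=; ring.
  + by rewrite leNgt cb /=; ring.
- move=> y; rewrite /ind0; case: (leP y c) => [yc|cy].
    by rewrite (le_trans yc (ltW cb)) mulN1r addNr normr0.
  by rewrite mulr0 add0r ind0_le1.
Qed.

Lemma comp_matrixE (p : T -> T) (M : T -> T -> R) :
  is_matrix (fun f : T -> R => f \o p) M -> forall a b, M a b = delta R b (p a).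
Proof.
move=> Mp a b; have [Msum Mexp] := Mp a.
apply/eqP; rewrite -subr_eq0; apply/eqP; apply: eq0_small => e e0.
have [F uF Mtail] := abs_summable_tail Msum e0.
have [f [fc fb fL f1]] := bump_exists b (p a :: F).
have -> : delta R b (p a) = f (p a).
  by rewrite fL ?mem_head // /delta eq_sym; case: (_ == _).
apply: coef_isolate Mtail (Mexp f fc) e0 fb _ f1.
by move=> y yF yb; rewrite fL ?in_cons ?yF ?orbT // (negbTE yb).
Qed.

End Matrix.
End Omega1Like.

Theorem lemma3p2 (R : realType) (d : Order.disp_t) (T : orderType d)
  (z0 w1 : T) (hz0 : forall x : T, (z0 <= x)%O) (hT : omega1_like w1)
  (xi : T -> T)
  (hxi_lt : forall s : T, (s < w1)%O -> (xi s < w1)%O)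
  (hxi_inc : forall s t : T, (s < t)%O -> (t < w1)%O -> (xi s < xi t)%O)
  (hxi_top : xi w1 = w1) :
  (exists U : (T -> R) -> (T -> R),
     lin_isometry_C U /\
     (forall s : T, U (ind0 R s) = ind0 R (xi s)) /\
     (forall f, Ccont f -> in_cspan xi (U f)) /\
     (forall g, in_cspan xi g -> exists f, Ccont f /\ U f = g) /\
     (forall V : (T -> R) -> (T -> R), lin_isometry_C V ->
        (forall s : T, V (ind0 R s) = ind0 R (xi s)) ->
        forall f, Ccont f -> V f = U f)) /\
  (forall a : T, exists p, valid_piece z0 w1 p /\ in_piece z0 xi p a) /\
  (forall (p q : piece T) (a : T), valid_piece z0 w1 p -> valid_piece z0 w1 q ->
     in_piece z0 xi p a -> in_piece z0 xi q a -> p = q) /\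
  (forall phi : T -> T, phi_spec z0 w1 xi phi ->
     let Phi := fun f : T -> R => f \o phi in
     continuous (phi : order_topology T -> order_topology T) /\
     phi \o phi = phi /\
     linear_on_C Phi /\
     (forall f, Ccont f -> supn (Phi f) <= supn f) /\
     (forall f, Ccont f -> Phi (Phi f) = Phi f) /\
     (forall f, Ccont f -> in_cspan xi (Phi f)) /\
     (forall g, in_cspan xi g -> exists f, Ccont f /\ Phi f = g) /\
     (exists M, is_matrix Phi M) /\
     (forall M, is_matrix Phi M -> forall a b : T,
        ((a <= xi z0)%O -> M a b = delta R b (xi z0)) /\
        (forall s t : T, (s < w1)%O -> is_succ s t ->
           (xi s < a)%O -> (a <= xi t)%O -> M a b = delta R b (xi t)) /\
        (forall l z : T, is_limit z0 l -> is_sup_below xi l z ->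
           (z <= a)%O -> (a <= xi l)%O -> M a b = delta R b z))).
Proof.
have xi_inc := homo_lt_omega1 hT hxi_lt hxi_inc hxi_top.
have U_iso : lin_isometry_C (fun f : T -> R => f \o xi_ceil w1 xi).
  exact: comp_xi_ceil_lin_isometry.
have U_ind0 := comp_xi_ceil_ind0 hT xi_inc hxi_top R.
split.
  exists (fun f => f \o xi_ceil w1 xi); split => //; split => //; split.
    by move=> f; apply: (comp_xi_ceil_in_cspan hz0 hT xi_inc hxi_top).
  split; first by move=> g /(in_cspan_comp_xi hz0 hT xi_inc hxi_top) [? ?]; exists (g \o xi).
  move=> V Viso Vind; apply: (lin_isometry_C_unique hz0 hT Viso U_iso) => s.
  by rewrite Vind U_ind0.
split.
  move=> a; have [p [vp pa]] := piece_index_exists z0 hT (xi_ceil w1 xi a).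
  by exists p; rewrite (in_pieceE hz0 hT xi_inc hxi_top).
split.
  move=> p q a vp vq; rewrite !(in_pieceE hz0 hT xi_inc hxi_top) //.
  exact: piece_index_inj.
move=> phi phiP Phi.
have phi_cont := phi_continuous hz0 hT xi_inc hxi_top phiP.
have phi_idem := phi_idem hz0 hT xi_inc hxi_top phiP.
split=> //; split=> //; split; first by split=> // f; apply: Ccont_comp.
split; first by move=> f fc; exact: (supn_comp_le hz0 hT phi fc).
split; first by move=> f _; rewrite /Phi -compA phi_idem.
split; first by move=> f; exact: (comp_phi_in_cspan hz0 hT xi_inc hxi_top phiP).
split.
  move=> g gcs; exists g; split; first by case: gcs.
  exact: (in_cspan_comp_phi hz0 hT xi_inc hxi_top phiP gcs).
split; first by exists (fun a b => delta R b (phi a)); apply: comp_is_matrix.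
move=> M /(comp_matrixE hz0 hT) ME a b; rewrite !ME; case: phiP => phi0 [phiS phiL].
split; first by move=> ?; rewrite phi0.
split; first by move=> s t *; rewrite (phiS s t).
by move=> l z *; rewrite (phiL l z).
Qed.
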